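(* Let $\underline\lambda=(\lambda^1,1^m)$ be a bipartition of $n$ whose second component is a single column, so that $M^{\underline\lambda}$ is an $\mathcal R_n$-module. For every standard bitableau $U=(U^1,U^2)$ of shape $\underline\lambda$ and every $1\le i\le n$, $$L_iv_U=\epsilon_i\,\mathbf q^{c_U(i)}v_U,\qquad \epsilon_i=\begin{cases}1& i\in U^1\\ 0& i\in U^2.\end{cases}$$
   Context: $\mathbf q$ is an indeterminate. $\mathcal R_n$ is the generic mirabolic Hecke algebra over $\mathbb C(\mathbf q)$, identified with $\mathcal H_n(1,0)/I_n^{(\emptyset,2)}$, where $\mathcal H_n(1,0)$ has generators $X,T_1,\dots,T_{n-1}$ (Hecke relations, $XT_i=T_iX$ for $i\ge2$, $XT_1XT_1=T_1XT_1X$, $X^2=X$), $I_n^{(\emptyset,2)}$ is generated by $1-X+T_1-XT_1-T_1X+XT_1X-T_1XT_1+XT_1XT_1$, and $e\in\mathcal R_n$ is the image of $X$. The Jucys–Murphy elements of $\mathcal R_n$ are $L_i=\mathbf q^{1-i}T_{i-1}\cdots T_1eT_1\cdots T_{i-1}$, $i=1,\dots,n$. Standard bitableaux, contents $c_U(i)=(j-1)+(\text{column}-\text{row of } i \text{ in } U^j)$ for $i\in U^j$, and the modules $M^{\underline\lambda}$ with basis $\{v_U\}$ are as in Ariki–Koike: $Xv_U=v_U$ if $1\in U^1$, $0$ if $1\in U^2$; $T_iv_U=\mathbf q v_U$ (same row, same tableau), $-v_U$ (same column, same tableau), $\frac{\mathbf q-1}{1-\mathbf q^{d}}v_U+(1+\frac{\mathbf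 q-1}{1-\mathbf q^{d}})v_{s_i(U)}$ with $d=c_U(i)-c_U(i+1)$ (same tableau otherwise), $v_{s_i(U)}$ ($i\in U^1,i+1\in U^2$), $(\mathbf q-1)v_U+\mathbf q v_{s_i(U)}$ ($i\in U^2,i+1\in U^1$). *)

From HB Require Import structures.
From mathcomp Require Import all_boot all_order all_algebra algC.
Unset Printing Implicit Defensive.
Import GRing.Theory Num.Theory.
Local Open Scope ring_scope.

Notation Fq := {fraction {poly algC}}.
Definition q : Fq := tofrac ('X : {poly algC}).

(* A cell of a bitableau: (component, row, column), 0-based row/column;
   component false = U^1, true = U^2. *)
Definition cell (n : nat) := (bool * 'I_n * 'I_n)%type.
Definition ccomp {n} (c : cell n) : bool := c.1.1.
Definition crow {n} (c : cell n) : nat := c.1.2.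
Definition ccol {n} (c : cell n) : nat := c.2.

(* A bitableau filled with 1..n: entry e (1 <= e <= n) sits at ordinal e-1. *)
Definition bitab (n : nat) := {ffun 'I_n -> cell n}.

Definition ent {n} (U : bitab n) (e : nat) : option (cell n) :=
  if (0 < e)%N then omap U (insub e.-1 : option 'I_n) else None.

Definition is_partition (lam : seq nat) : bool :=
  sorted geq lam && all (fun x => 0 < x)%N lam.

Definition in_shape (lam : seq nat) (m : nat) {n} (c : cell n) : bool :=
  if ccomp c then (ccol c == 0%N) && (crow c < m)%N
  else (crow c < size lam)%N && (ccol c < nth 0%N lam (crow c))%N.

Definition standard (lam : seq nat) (m n : nat) (U : bitab n) : bool :=
  [&& injectiveb U,
      [forall k, in_shape lam m (U k)],
      [forall c : cell n, in_shape lam m c ==> [exists k, U k == c]],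
      [forall k, forall l,
         [&& ccomp (U k) == ccomp (U l), crow (U k) == crow (U l)
           & (ccol (U k) < ccol (U l))%N] ==> (k < l)%N] &
      [forall k, forall l,
         [&& ccomp (U k) == ccomp (U l), ccol (U k) == ccol (U l)
           & (crow (U k) < crow (U l))%N] ==> (k < l)%N]].

(* content c_U(e) = (j-1) + (column - row) for e in U^j *)
Definition content {n} (U : bitab n) (e : nat) : int :=
  match ent U e with
  | Some c => (nat_of_bool (ccomp c))%:Z + (ccol c)%:Z - (crow c)%:Z
  | None => 0
  end.

Definition eps {n} (U : bitab n) (e : nat) : Fq :=
  match ent U e with
  | Some c => if ccomp c then 0 else 1
  | None => 0
  end.

(* s_i(U): exchange the entries i and i+1 *)
Definition swapU {n} (U : bitab n) (i : nat) : bitab n :=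
  [ffun k : 'I_n => if (k.+1 == i)%N then odflt (U k) (ent U i.+1)
                    else if (k.+1 == i.+1)%N then odflt (U k) (ent U i)
                    else U k].

(* vectors of M^lambda: coordinates w.r.t. the basis (v_U) *)
Notation vec n := {ffun bitab n -> Fq^o}.
Definition bv {n} (U : bitab n) : vec n := [ffun W => (W == U)%:R].

Definition Tb {n} (i : nat) (U : bitab n) : vec n :=
  match ent U i, ent U i.+1 with
  | Some a, Some b =>
      if ccomp a == ccomp b then
        if crow a == crow b then q *: bv U
        else if ccol a == ccol b then - bv U
        else let d := content U i - content U i.+1 in
             let c := (q - 1) / (1 - q ^ d) in
             c *: bv U + (1 + c) *: bv (swapU U i)
      else if ~~ ccomp a then bv (swapU U i)
      else (q - 1) *: bv U + q *: bv (swapU U i)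
  | _, _ => 0
  end.

(* action of X (image e) on v_U *)
Definition Xb {n} (U : bitab n) : vec n :=
  match ent U 1 with
  | Some a => if ccomp a then 0 else bv U
  | None => 0
  end.

Definition act (lam : seq nat) (m n : nat) (B : bitab n -> vec n) (v : vec n)
  : vec n := \sum_(U | standard lam m n U) v U *: B U.

Definition Tact lam m n (i : nat) := act lam m n (Tb i).
Definition Xact lam m n := act lam m n Xb.

(* Tright k v = T_1 (T_2 (... (T_k v))) ; Tleft k v = T_k (... (T_1 v)) *)
Fixpoint Tright lam m n (k : nat) (v : vec n) : vec n :=
  match k with 0 => v | k'.+1 => Tright lam m n k' (Tact lam m n k'.+1 v) end.
Fixpoint Tleft lam m n (k : nat) (v : vec n) : vec n :=
  match k with 0 => v | k'.+1 => Tact lam m n k'.+1 (Tleft lam m n k' v) end.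

(* Jucys-Murphy element L_i = q^(1-i) T_(i-1)...T_1 e T_1...T_(i-1) acting on M^lambda *)
Definition Lact lam m n (i : nat) (v : vec n) : vec n :=
  q ^ (1 - (i%:Z)) *: Tleft lam m n (i.-1) (Xact lam m n (Tright lam m n (i.-1) v)).

From HB Require Import structures.
From mathcomp Require Import all_boot all_order all_algebra algC.
From mathcomp Require Import perm zify ring.
Import GRing.Theory Num.Theory.
Local Open Scope ring_scope.

(* Since L_1 = e and L_(i+1) = q^-1 T_i L_i T_i, the proof is an induction on i,
   simultaneously for all standard bitableaux. *)

Lemma lin_add {R : pzRingType} {M : lmodType R} {f : M -> M} :
  linear f -> forall v w, f (v + w) = f v + f w.
Proof. by move=> fL v w; rewrite -[v in LHS]scale1r fL scale1r. Qed.

Lemma lin_scale {R : pzRingType} {M : lmodType R} {f : M -> M} :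
  linear f -> forall a v, f (a *: v) = a *: f v.
Proof. by move=> fL; apply: scalable_linear. Qed.

Lemma rank_two_conjugation {F : fieldType} {M : lmodType F} {T L : M -> M}
    {t x b : F} {u v : M} :
  linear T -> linear L -> t != 0 -> x != 0 -> x != 1 ->
  let c := (t - 1) / (1 - x) in let c' := (t - 1) / (1 - x^-1) in
  T u = c *: u + (1 + c) *: v -> T v = c' *: v + (1 + c') *: u ->
  L u = (x * b) *: u -> L v = b *: v ->
  t^-1 *: T (L (T u)) = b *: u.
Proof.
move=> TL LL t0 x0 x1 c c' Tu Tv Lu Lv.
have x1' : 1 - x != 0 by rewrite subr_eq0 eq_sym.
have c'E : c' = - x * c.
  rewrite /c' /c -[x^-1]mul1r -(divff x0) -mulrBl; field.
  by rewrite x0 x1' -opprB oppr_eq0 x1'.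
rewrite Tu (lin_add LL) !(lin_scale LL) Lu Lv !scalerA (lin_add TL) !(lin_scale TL).
rewrite Tu Tv !scalerDr !scalerA [_ *: v + _ *: u]addrC addrACA -!scalerDl.
have -> : t^-1 * (c * (x * b)) * (1 + c) + t^-1 * ((1 + c) * b) * c' = 0.
  by rewrite c'E; ring.
rewrite scale0r addr0 c'E /c; congr (_ *: _); field.
by rewrite x1' t0.
Qed.

Lemma q_neq0 : q != 0.
Proof. by rewrite /q tofrac_eq0 polyX_eq0. Qed.

Lemma q_expn_neq1 k : (0 < k)%N -> q ^+ k != 1.
Proof.
move=> k_gt0; rewrite /q -tofracXn -tofrac1 tofrac_eq.
apply/eqP => /(congr1 (fun p : {poly algC} => size p)).
by rewrite size_polyXn size_poly1 => -[k0]; rewrite k0 in k_gt0.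
Qed.

Lemma q_expz_neq1 {d : int} : d != 0 -> q ^ d != 1.
Proof.
case: d => k k_neq0.
  by rewrite -exprnP q_expn_neq1 // lt0n; move: k_neq0; rewrite eqz_nat.
by rewrite NegzE -invr_expz -exprnP invr_eq1 q_expn_neq1.
Qed.

Section Linearity.
Context {lam : seq nat} {m n : nat}.

Lemma act_linear (B : bitab n -> vec n) : linear (act lam m n B).
Proof.
move=> a v w; rewrite /act scaler_sumr -big_split /=.
by apply: eq_bigr => U _; rewrite !ffunE scalerDl scalerA.
Qed.

Lemma act_bv (B : bitab n -> vec n) (U : bitab n) :
  standard lam m n U -> act lam m n B (bv U) = B U.
Proof.
move=> sU; rewrite /act (bigD1 U) //= ffunE eqxx scale1r big1 ?addr0 //.
by move=> W /andP[_ /negbTE nWU]; rewrite ffunE nWU scale0r.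
Qed.

Lemma Tact_linear i : linear (Tact lam m n i).
Proof. exact: act_linear. Qed.

Lemma Tright_linear k : linear (Tright lam m n k).
Proof. by elim: k => [//|k IH] a v w /=; rewrite Tact_linear IH. Qed.

Lemma Tleft_linear k : linear (Tleft lam m n k).
Proof. by elim: k => [//|k IH] a v w /=; rewrite IH Tact_linear. Qed.

Lemma Lact_linear i : linear (Lact lam m n i).
Proof.
move=> a v w; rewrite /Lact Tright_linear /Xact act_linear Tleft_linear.
by rewrite scalerDr !scalerA mulrC.
Qed.

Lemma Lact_rec k (v : vec n) : Lact lam m n k.+2 v =
  q^-1 *: Tact lam m n k.+1 (Lact lam m n k.+1 (Tact lam m n k.+1 v)).
Proof.
have TleftS w : Tleft lam m n k.+1 w = Tact lam m n k.+1 (Tleft lam m n k w) by [].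
have TrightS w : Tright lam m n k.+1 w = Tright lam m n k (Tact lam m n k.+1 w) by [].
rewrite /Lact !succnK TleftS TrightS (lin_scale (Tact_linear _)) scalerA -exprN1.
rewrite -expfzDr; last exact: q_neq0.
by congr (_ ^ _ *: _); lia.
Qed.

End Linearity.

Lemma entE {n} (U : bitab n) (k : 'I_n) : ent U k.+1 = Some (U k).
Proof. by rewrite /ent ltn0Sn /= valK. Qed.

Lemma content_ent {n} {U W : bitab n} {i j : nat} :
  ent U i = ent W j -> content U i = content W j.
Proof. by rewrite /content => ->. Qed.

Lemma contentE {n} (U : bitab n) (k : 'I_n) :
  content U k.+1 = (ccomp (U k) : nat)%:Z + (ccol (U k))%:Z - (crow (U k))%:Z.
Proof. by rewrite /content entE. Qed.

Lemma cell_eq {n} {c d : cell n} :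
  ccomp c = ccomp d -> crow c = crow d -> ccol c = ccol d -> c = d.
Proof.
case: c => [[c1 c2] c3]; case: d => [[d1 d2] d3]; rewrite /ccomp /crow /ccol /=.
by move=> -> /val_inj -> /val_inj ->.
Qed.

Lemma cellE {n} b (r c : 'I_n) :
  (ccomp (b, r, c) = b) * (crow (b, r, c) = r) * (ccol (b, r, c) = c).
Proof. by []. Qed.

Definition nw {n} (c d : cell n) : bool :=
  [&& ccomp c == ccomp d, crow c <= crow d & ccol c <= ccol d]%N.

Lemma in_shape_nw {lam m n} {c d : cell n} : is_partition lam ->
  nw c d -> in_shape lam m d -> in_shape lam m c.
Proof.
case/andP=> lam_sorted _ /and3P[/eqP comp_cd row_cd col_cd].
rewrite /in_shape comp_cd; case: (ccomp d) => /andP[d1 d2].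
  by rewrite (eqP d1) leqn0 in col_cd; rewrite col_cd (leq_ltn_trans row_cd d2).
rewrite (leq_ltn_trans row_cd d1) /=; apply: leq_trans (leq_ltn_trans col_cd d2) _.
have geq_trans : transitive geq by move=> y x z /= h1 h2; apply: leq_trans h2 h1.
apply: (sorted_leq_nth geq_trans leqnn 0%N lam_sorted) => //; rewrite inE //.
exact: leq_ltn_trans d1.
Qed.

Section Standard.
Context {lam : seq nat} {m n : nat} {U : bitab n}.
Hypotheses (Hp : is_partition lam) (HU : standard lam m n U).

Lemma std_inj : injective U.
Proof. by case/and5P: HU => /injectiveP. Qed.

Lemma std_in_shape k : in_shape lam m (U k).
Proof. by case/and5P: HU => _ /forallP. Qed.

Lemma std_col0 {k} : ccomp (U k) -> ccol (U k) = 0%N.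
Proof. by move=> ck; have := std_in_shape k; rewrite /in_shape ck => /andP[/eqP]. Qed.

Lemma std_row_lt {k l} : ccomp (U k) = ccomp (U l) -> crow (U k) = crow (U l) ->
  (ccol (U k) < ccol (U l))%N -> (k < l)%N.
Proof.
case/and5P: HU => _ _ _ /forallP/(_ k)/forallP/(_ l)/implyP rw _ h1 h2 h3.
by apply: rw; rewrite h1 h2 h3 !eqxx.
Qed.

Lemma std_col_lt {k l} : ccomp (U k) = ccomp (U l) -> ccol (U k) = ccol (U l) ->
  (crow (U k) < crow (U l))%N -> (k < l)%N.
Proof.
case/and5P: HU => _ _ _ _ /forallP/(_ k)/forallP/(_ l)/implyP cl h1 h2 h3.
by apply: cl; rewrite h1 h2 h3 !eqxx.
Qed.

Lemma std_entry {c : cell n} : in_shape lam m c -> exists e, U e = c.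
Proof.
case/and5P: HU => _ _ /forallP ex _ _ c_sh.
by have /existsP[e /eqP Ue] := implyP (ex c) c_sh; exists e.
Qed.

Lemma std_row_le {k l} : ccomp (U k) = ccomp (U l) -> crow (U k) = crow (U l) ->
  (ccol (U k) <= ccol (U l))%N -> (k <= l)%N.
Proof.
move=> h1 h2; rewrite leq_eqVlt => /predU1P[h3|h3]; last exact/ltnW/std_row_lt.
by rewrite (std_inj _ _ (cell_eq h1 h2 h3)).
Qed.

Lemma std_col_le {k l} : ccomp (U k) = ccomp (U l) -> ccol (U k) = ccol (U l) ->
  (crow (U k) <= crow (U l))%N -> (k <= l)%N.
Proof.
move=> h1 h2; rewrite leq_eqVlt => /predU1P[h3|h3]; last exact/ltnW/std_col_lt.
by rewrite (std_inj _ _ (cell_eq h1 h3 h2)).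
Qed.

(* Entries increase towards the south-east: go along the row of U k to the
   column of U l, then down that column. *)
Lemma nw_entry_le {k l} : nw (U k) (U l) -> (k <= l)%N.
Proof.
case/and3P=> /eqP h1 h2 h3; pose d : cell n := (ccomp (U k), (U k).1.2, (U l).2).
have d_nw : nw d (U l) by rewrite /nw !cellE h1 eqxx h2 leqnn.
have [e Ue] := std_entry (in_shape_nw Hp d_nw (std_in_shape l)).
have le_ke : (k <= e)%N by apply: std_row_le; rewrite Ue !cellE.
have le_el : (e <= l)%N by apply: std_col_le; rewrite Ue !cellE.
exact: leq_trans le_ke le_el.
Qed.

Lemma nw_entry c k : nw c (U k) -> exists2 e, U e = c & (e <= k)%N.
Proof.
move=> c_nw; have [e Ue] := std_entry (in_shape_nw Hp c_nw (std_in_shape k)).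
by exists e => //; apply: nw_entry_le; rewrite Ue.
Qed.

Lemma std_row_col_lt {k l} : ccomp (U k) = ccomp (U l) -> crow (U k) = crow (U l) ->
  (k < l)%N -> (ccol (U k) < ccol (U l))%N.
Proof.
move=> h1 h2; apply: contraTT; rewrite -!leqNgt; exact: std_row_le (esym h1) (esym h2).
Qed.

Lemma std_col_row_lt {k l} : ccomp (U k) = ccomp (U l) -> ccol (U k) = ccol (U l) ->
  (k < l)%N -> (crow (U k) < crow (U l))%N.
Proof.
move=> h1 h2; apply: contraTT; rewrite -!leqNgt; exact: std_col_le (esym h1) (esym h2).
Qed.

Lemma row_step_entry {k l} (j : 'I_n) : ccomp (U k) = ccomp (U l) ->
  (crow (U k) <= crow (U l))%N -> (ccol (U k) < j <= ccol (U l))%N ->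
  exists2 e, U e = (ccomp (U k), (U k).1.2, j) & (k < e <= l)%N.
Proof.
move=> h1 h2 /andP[h3 h4].
have [|e Ue le_el] := nw_entry (ccomp (U k), (U k).1.2, j) l.
  by rewrite /nw !cellE h1 eqxx h2 h4.
by exists e; rewrite // le_el andbT; apply: std_row_lt; rewrite Ue !cellE.
Qed.

Lemma col_step_entry {k l} (j : 'I_n) : ccomp (U k) = ccomp (U l) ->
  (ccol (U k) <= ccol (U l))%N -> (crow (U k) < j <= crow (U l))%N ->
  exists2 e, U e = (ccomp (U k), j, (U k).2) & (k < e <= l)%N.
Proof.
move=> h1 h2 /andP[h3 h4].
have [|e Ue le_el] := nw_entry (ccomp (U k), j, (U k).2) l.
  by rewrite /nw !cellE h1 eqxx h2 h4.
by exists e; rewrite // le_el andbT; apply: std_col_lt; rewrite Ue !cellE.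
Qed.

End Standard.

Lemma corner {lam m n} {U : bitab n} {o0 : 'I_n} :
  is_partition lam -> standard lam m n U -> o0 = 0%N :> nat ->
  ccomp (U o0) = false -> crow (U o0) = 0%N /\ ccol (U o0) = 0%N.
Proof.
move=> Hp HU o0_0 comp_o0.
have [|e Ue le_e0] := nw_entry Hp HU (false, o0, o0) o0.
  by rewrite /nw !cellE comp_o0 o0_0 !leq0n.
have -> : o0 = e by apply: ord_inj; lia.
by rewrite Ue !cellE.
Qed.

(* Cells of two consecutive entries i = o1 + 1 and i + 1 = o2 + 1. *)
Section Adjacent.
Context {lam : seq nat} {m n : nat} {U : bitab n} {o1 o2 : 'I_n}.
Hypotheses (Hp : is_partition lam) (HU : standard lam m n U).
Hypothesis Ho : o2 = o1.+1 :> nat.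

Lemma adjacent_same_row : ccomp (U o1) = ccomp (U o2) -> crow (U o1) = crow (U o2) ->
  ccol (U o2) = (ccol (U o1)).+1.
Proof.
move=> h1 h2; have lt12 := std_row_col_lt HU h1 h2 (ltac:(lia) : (o1 < o2)%N).
have bound : ((ccol (U o1)).+1 < n)%N by apply: leq_ltn_trans lt12 (ltn_ord (U o2).2).
have [|e Ue /andP[lt1e le_e2]] := row_step_entry Hp HU (Ordinal bound) h1 (eq_leq h2).
  by rewrite /= ltnSn.
have -> : o2 = e by apply: ord_inj; lia.
by rewrite Ue !cellE.
Qed.

Lemma adjacent_same_col : ccomp (U o1) = ccomp (U o2) -> ccol (U o1) = ccol (U o2) ->
  crow (U o2) = (crow (U o1)).+1.
Proof.
move=> h1 h2; have lt12 := std_col_row_lt HU h1 h2 (ltac:(lia) : (o1 < o2)%N).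
have bound : ((crow (U o1)).+1 < n)%N by apply: leq_ltn_trans lt12 (ltn_ord (U o2).1.2).
have [|e Ue /andP[lt1e le_e2]] := col_step_entry Hp HU (Ordinal bound) h1 (eq_leq h2).
  by rewrite /= ltnSn.
have -> : o2 = e by apply: ord_inj; lia.
by rewrite Ue !cellE.
Qed.

(* Consecutive entries of U^1 in different rows and columns lie on different
   diagonals: otherwise the cell at the row of one and the column of the other
   would need an entry strictly between them. *)
Lemma adjacent_diagonals_differ : ccomp (U o1) = false -> ccomp (U o2) = false ->
  crow (U o1) <> crow (U o2) -> ccol (U o1) <> ccol (U o2) ->
  (ccol (U o1))%:Z - (crow (U o1))%:Z != (ccol (U o2))%:Z - (crow (U o2))%:Z.
Proof.
move=> c1 c2 r12 k12; apply/eqP => same_diag.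
have c12 : ccomp (U o1) = ccomp (U o2) by rewrite c1 c2.
case: (ltngtP (crow (U o1)) (crow (U o2))) => [r_lt|r_gt|//].
- have [|e Ue /andP[lt1e le_e2]] := row_step_entry Hp HU (U o2).2 c12 (ltnW r_lt).
    by rewrite leqnn andbT -/(ccol (U o2)); lia.
  have o2_e : o2 = e by apply: ord_inj; lia.
  by move: r12; rewrite o2_e Ue !cellE.
- have [|e Ue /andP[lt2e le_e1]] := row_step_entry Hp HU (U o1).2 (esym c12) (ltnW r_gt).
    by rewrite leqnn andbT -/(ccol (U o1)); lia.
  lia.
Qed.

End Adjacent.

Section Transposition.
Context {n : nat} {o1 o2 : 'I_n}.
Hypothesis Ho : o2 = o1.+1 :> nat.

Lemma adj_succ : o1.+2 = o2.+1.
Proof. by rewrite Ho. Qed.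

Lemma ent_next (W : bitab n) : ent W o1.+2 = Some (W o2).
Proof. by rewrite adj_succ entE. Qed.

Lemma swapUE (W : bitab n) (k : 'I_n) : swapU W o1.+1 k = W (tperm o1 o2 k).
Proof.
rewrite /swapU ffunE !eqSS; case: tpermP => [->|->|k_o1 k_o2].
- by rewrite eqxx ent_next.
- by rewrite Ho eqxx ifN_eqC ?entE //; lia.
have ne1 : k != o1 :> nat by apply/eqP => /ord_inj.
have ne2 : k != o1.+1 :> nat by rewrite -Ho; apply/eqP => /ord_inj.
by rewrite (negbTE ne1) (negbTE ne2).
Qed.

Lemma swapUK (W : bitab n) : swapU (swapU W o1.+1) o1.+1 = W.
Proof. by apply/ffunP => k; rewrite !swapUE tpermK. Qed.

Lemma ent_swap_cur (W : bitab n) : ent (swapU W o1.+1) o1.+1 = ent W o1.+2.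
Proof. by rewrite entE swapUE tpermL ent_next. Qed.

Lemma ent_swap_next (W : bitab n) : ent (swapU W o1.+1) o1.+2 = ent W o1.+1.
Proof. by rewrite ent_next swapUE tpermR entE. Qed.

Lemma tperm_lt (x y : 'I_n) : (x < y)%N -> ~ (x = o1 /\ y = o2) ->
  (tperm o1 o2 x < tperm o1 o2 y)%N.
Proof.
have neq (a b : 'I_n) : a <> b -> a != b :> nat by move=> ab; apply/eqP => /ord_inj.
move=> lt_xy not12.
case: tpermP => [ex|ex|/neq x1 /neq x2]; case: tpermP => [ey|ey|/neq y1 /neq y2];
  rewrite ?ex ?ey in lt_xy not12 *; try lia.
by case: not12.
Qed.

Lemma swap_standard lam m (U : bitab n) : standard lam m n U ->
  ~ (ccomp (U o1) = ccomp (U o2) /\ crow (U o1) = crow (U o2)) ->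
  ~ (ccomp (U o1) = ccomp (U o2) /\ ccol (U o1) = ccol (U o2)) ->
  standard lam m n (swapU U o1.+1).
Proof.
move=> HU not_row not_col.
apply/and5P; split.
- apply/injectiveP => x y; rewrite !swapUE => /(std_inj HU).
  exact: (can_inj (tpermK o1 o2)).
- by apply/forallP => k; rewrite swapUE std_in_shape.
- apply/forallP => c; apply/implyP => /(std_entry HU)[e Ue]; apply/existsP.
  by exists (tperm o1 o2 e); rewrite swapUE tpermK Ue.
- apply/forallP => x; apply/forallP => y; apply/implyP; rewrite !swapUE.
  case/and3P => /eqP h1 /eqP h2 lt_col; rewrite -(tpermK o1 o2 x) -(tpermK o1 o2 y).
  apply: tperm_lt; first exact: (std_row_lt HU h1 h2 lt_col).
  by case=> ex ey; apply: not_row; rewrite ex ey in h1 h2.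
- apply/forallP => x; apply/forallP => y; apply/implyP; rewrite !swapUE.
  case/and3P => /eqP h1 /eqP h2 lt_row; rewrite -(tpermK o1 o2 x) -(tpermK o1 o2 y).
  apply: tperm_lt; first exact: (std_col_lt HU h1 h2 lt_row).
  by case=> ex ey; apply: not_col; rewrite ex ey in h1 h2.
Qed.

End Transposition.

Section TAction.
Context {lam : seq nat} {m n : nat} {o1 o2 : 'I_n} {U : bitab n}.
Hypotheses (Ho : o2 = o1.+1 :> nat) (HU : standard lam m n U).

Local Notation T := (Tact lam m n o1.+1).
Local Notation V := (swapU U o1.+1).

Lemma T_same_row : ccomp (U o1) = ccomp (U o2) -> crow (U o1) = crow (U o2) ->
  T (bv U) = q *: bv U.
Proof.
move=> h1 h2.
by rewrite /Tact (act_bv _ _ HU) /Tb (ent_next Ho) entE h1 h2 !eqxx.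
Qed.

Lemma T_same_col : ccomp (U o1) = ccomp (U o2) -> crow (U o1) != crow (U o2) ->
  ccol (U o1) = ccol (U o2) -> T (bv U) = - bv U.
Proof.
move=> h1 /negbTE h2 h3.
by rewrite /Tact (act_bv _ _ HU) /Tb (ent_next Ho) entE h1 h2 h3 !eqxx.
Qed.

Lemma T_generic : ccomp (U o1) = ccomp (U o2) -> crow (U o1) != crow (U o2) ->
  ccol (U o1) != ccol (U o2) ->
  let c := (q - 1) / (1 - q ^ (content U o1.+1 - content U o1.+2)) in
  T (bv U) = c *: bv U + (1 + c) *: bv V.
Proof.
move=> h1 /negbTE h2 /negbTE h3.
by rewrite /Tact (act_bv _ _ HU) /Tb (ent_next Ho) entE h1 eqxx h2 h3.
Qed.

Lemma T_generic_swap : standard lam m n V ->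
  ccomp (U o1) = ccomp (U o2) -> crow (U o1) != crow (U o2) ->
  ccol (U o1) != ccol (U o2) ->
  let c := (q - 1) / (1 - q ^ (content U o1.+2 - content U o1.+1)) in
  T (bv V) = c *: bv V + (1 + c) *: bv U.
Proof.
move=> HV h1 /negbTE h2 /negbTE h3.
rewrite /Tact (act_bv _ _ HV) /Tb (swapUK Ho).
rewrite (content_ent (ent_swap_cur Ho U)) (content_ent (ent_swap_next Ho U)).
rewrite (ent_swap_cur Ho) (ent_swap_next Ho) (ent_next Ho) entE.
by rewrite h1 eqxx [crow _ == _]eq_sym h2 [ccol _ == _]eq_sym h3.
Qed.

Lemma T_lower_upper : ccomp (U o1) = true -> ccomp (U o2) = false ->
  T (bv U) = (q - 1) *: bv U + q *: bv V.
Proof.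
by move=> c1 c2; rewrite /Tact (act_bv _ _ HU) /Tb (ent_next Ho) entE c1 c2.
Qed.

Lemma T_lower_upper_swap : standard lam m n V ->
  ccomp (U o1) = true -> ccomp (U o2) = false -> T (bv V) = bv U.
Proof.
move=> HV c1 c2; rewrite /Tact (act_bv _ _ HV) /Tb (swapUK Ho).
by rewrite (ent_swap_cur Ho) (ent_swap_next Ho) (ent_next Ho) entE c1 c2.
Qed.

Lemma T_upper_lower : ccomp (U o1) = false -> ccomp (U o2) = true -> T (bv U) = bv V.
Proof.
by move=> c1 c2; rewrite /Tact (act_bv _ _ HU) /Tb (ent_next Ho) entE c1 c2.
Qed.

End TAction.

Definition jm_weight {n} (U : bitab n) (i : nat) : Fq := eps U i * q ^ content U i.

Lemma weight_ent {n} {U W : bitab n} {i j : nat} :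
  ent U i = ent W j -> jm_weight U i = jm_weight W j.
Proof. by move=> E; rewrite /jm_weight (content_ent E) /eps E. Qed.

Lemma weightE {n} (U : bitab n) (k : 'I_n) : jm_weight U k.+1 =
  if ccomp (U k) then 0 else q ^ ((ccol (U k))%:Z - (crow (U k))%:Z).
Proof.
by rewrite /jm_weight contentE /eps entE; case: ccomp; rewrite ?mul0r ?mul1r ?add0r.
Qed.

Lemma Lact_first lam m n (U : bitab n) : is_partition lam -> standard lam m n U ->
  (0 < n)%N -> Lact lam m n 1 (bv U) = jm_weight U 1 *: bv U.
Proof.
move=> Hp HU n_gt0; pose o0 : 'I_n := Ordinal n_gt0.
have -> : Lact lam m n 1 (bv U) = Xb U by rewrite /Lact /= subrr expr0z scale1r /Xact act_bv.
rewrite /Xb (entE U o0) (weightE U o0); case: ifP => [_|comp_o0]; first by rewrite scale0r.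
by have [-> ->] := corner Hp HU (erefl : o0 = 0%N :> nat) comp_o0; rewrite subrr expr0z scale1r.
Qed.

Section InductionStep.
Context {lam : seq nat} {m n : nat} {o1 o2 : 'I_n}.
Hypotheses (Hp : is_partition lam) (Ho : o2 = o1.+1 :> nat).
Hypothesis IH : forall W, standard lam m n W ->
  Lact lam m n o1.+1 (bv W) = jm_weight W o1.+1 *: bv W.
Context {U : bitab n}.
Hypothesis HU : standard lam m n U.

Local Notation V := (swapU U o1.+1).

Lemma step_same_row : ccomp (U o1) = ccomp (U o2) -> crow (U o1) = crow (U o2) ->
  Lact lam m n o1.+2 (bv U) = jm_weight U o1.+2 *: bv U.
Proof.
move=> h1 h2; have TU := T_same_row Ho HU h1 h2.
have wU : jm_weight U o1.+2 = jm_weight U o1.+1 * q.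
  rewrite (adj_succ Ho) !weightE -h1 (adjacent_same_row Hp HU Ho h1 h2) -h2.
  case: ccomp; first by rewrite mul0r.
  rewrite -[q in RHS]expr1z -expfzDr; last exact: q_neq0.
  by congr (_ ^ _); lia.
rewrite Lact_rec TU !(lin_scale (Lact_linear _)) (IH _ HU) !(lin_scale (Tact_linear _)) TU.
by rewrite !scalerA wU mulKf ?q_neq0.
Qed.

Lemma step_same_col : ccomp (U o1) = ccomp (U o2) -> crow (U o1) != crow (U o2) ->
  ccol (U o1) = ccol (U o2) -> Lact lam m n o1.+2 (bv U) = jm_weight U o1.+2 *: bv U.
Proof.
move=> h1 h2 h3; have TU := T_same_col Ho HU h1 h2 h3.
have wU : jm_weight U o1.+2 = jm_weight U o1.+1 * q^-1.
  rewrite (adj_succ Ho) !weightE -h1 (adjacent_same_col Hp HU Ho h1 h3) -h3.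
  case: ccomp; first by rewrite mul0r.
  rewrite -exprN1 -expfzDr; last exact: q_neq0.
  by congr (_ ^ _); lia.
rewrite Lact_rec TU -scaleN1r !(lin_scale (Lact_linear _)) (IH _ HU).
rewrite !(lin_scale (Tact_linear _)) TU -scaleN1r !scalerA wU.
by rewrite mulrN1 mulN1r mulrN opprK mulrC.
Qed.

(* i, i + 1 in U^1 on different rows and columns, hence on different diagonals:
   T_i mixes v_U and v_(s_i U), and rank_two_conjugation applies. *)
Lemma step_generic : ccomp (U o1) = ccomp (U o2) -> crow (U o1) != crow (U o2) ->
  ccol (U o1) != ccol (U o2) -> Lact lam m n o1.+2 (bv U) = jm_weight U o1.+2 *: bv U.
Proof.
move=> h1 h2 h3.
have c1 : ccomp (U o1) = false.
  apply/negbTE/negP => c1; have c2 : ccomp (U o2) by rewrite -h1.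
  by move/eqP: h3; apply; rewrite (std_col0 HU c1) (std_col0 HU c2).
have c2 : ccomp (U o2) = false by rewrite -h1.
have HV : standard lam m n V.
  by apply: (swap_standard Ho) => // -[_ /eqP]; [apply/negP: h2 | apply/negP: h3].
set d := content U o1.+1 - content U o1.+2.
have d0 : d != 0.
  rewrite /d (adj_succ Ho) !contentE c1 c2 !add0r subr_eq0.
  exact: (adjacent_diagonals_differ Hp HU Ho c1 c2 (elimN eqP h2) (elimN eqP h3)).
have qdV : (q ^ d)^-1 = q ^ (content U o1.+2 - content U o1.+1).
  by rewrite /d invr_expz opprB.
have TV := T_generic_swap Ho HV h1 h2 h3; rewrite -qdV in TV.
have wU : jm_weight U o1.+1 = q ^ d * jm_weight U o1.+2.
  rewrite /jm_weight /eps entE (ent_next Ho) c1 c2 !mul1r -expfzDr; last exact: q_neq0.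
  by rewrite /d subrK.
rewrite Lact_rec; apply: (rank_two_conjugation (Tact_linear _) (Lact_linear _) q_neq0
  (expfz_neq0 _ q_neq0) (q_expz_neq1 d0) (T_generic Ho HU h1 h2 h3) TV).
  by rewrite (IH _ HU) wU.
by rewrite (IH _ HV) (weight_ent (ent_swap_cur Ho U)).
Qed.

Lemma step_lower_upper : ccomp (U o1) = true -> ccomp (U o2) = false ->
  Lact lam m n o1.+2 (bv U) = jm_weight U o1.+2 *: bv U.
Proof.
move=> c1 c2.
have HV : standard lam m n V by apply: (swap_standard Ho) => // -[]; rewrite c1 c2.
have w0 : jm_weight U o1.+1 = 0 by rewrite weightE c1.
rewrite Lact_rec (T_lower_upper Ho HU c1 c2) (lin_add (Lact_linear _)).
rewrite !(lin_scale (Lact_linear _)) (IH _ HU) (IH _ HV) (weight_ent (ent_swap_cur Ho U)).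
rewrite w0 scale0r scaler0 add0r !(lin_scale (Tact_linear _)) (T_lower_upper_swap Ho HV c1 c2).
by rewrite !scalerA mulrA mulVf ?q_neq0 ?mul1r.
Qed.

(* i in U^1 and i + 1 in U^2: both sides vanish. *)
Lemma step_upper_lower : ccomp (U o1) = false -> ccomp (U o2) = true ->
  Lact lam m n o1.+2 (bv U) = jm_weight U o1.+2 *: bv U.
Proof.
move=> c1 c2.
have HV : standard lam m n V by apply: (swap_standard Ho) => // -[]; rewrite c1 c2.
have w0 : jm_weight U o1.+2 = 0 by rewrite (adj_succ Ho) weightE c2.
rewrite Lact_rec (T_upper_lower Ho HU c1 c2) (IH _ HV) (weight_ent (ent_swap_cur Ho U)) w0.
by rewrite (lin_scale (Tact_linear _)) !scale0r scaler0.
Qed.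

End InductionStep.

Lemma Lact_step lam m n (o1 o2 : 'I_n) : is_partition lam -> o2 = o1.+1 :> nat ->
  (forall W, standard lam m n W -> Lact lam m n o1.+1 (bv W) = jm_weight W o1.+1 *: bv W) ->
  forall U, standard lam m n U -> Lact lam m n o1.+2 (bv U) = jm_weight U o1.+2 *: bv U.
Proof.
move=> Hp Ho IH U HU.
have [h1|h1] := eqVneq (ccomp (U o1)) (ccomp (U o2)).
  have [h2|h2] := eqVneq (crow (U o1)) (crow (U o2)).
    exact: (step_same_row Hp Ho IH HU h1 h2).
  have [h3|h3] := eqVneq (ccol (U o1)) (ccol (U o2)).
    exact: (step_same_col Hp Ho IH HU h1 h2 h3).
  exact: (step_generic Hp Ho IH HU h1 h2 h3).
move: h1; case c1: (ccomp (U o1)); case c2: (ccomp (U o2)) => // _.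
  exact: (step_lower_upper Ho IH HU c1 c2).
exact: (step_upper_lower Ho IH HU c1 c2).
Qed.

Theorem mainTheorem10 (lam : seq nat) (m n : nat) :
  is_partition lam -> (sumn lam + m)%N = n ->
  forall U : bitab n, standard lam m n U ->
  forall i : nat, (1 <= i <= n)%N ->
  Lact lam m n i (bv U) = (eps U i * q ^ content U i) *: bv U.
Proof.
move=> Hp _ U HU i /andP[i_gt0 i_le_n].
elim: i i_gt0 i_le_n U HU => [//|[|k] IH] _ i_le_n U HU.
  exact: Lact_first.
have lt_k : (k < n)%N by lia.
have lt_k1 : (k.+1 < n)%N by lia.
apply: (@Lact_step lam m n (Ordinal lt_k) (Ordinal lt_k1) Hp erefl _ U HU) => W HW.
by apply: IH => //; lia.
Qed.
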